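(* Let $T$ be an extension of $\mathsf{Q}$ which represents a function $g$. Then $T$ represents every (partial) function $f$ that can be computed by an algorithm with oracle access to $g$.
   Context: $\mathsf{Q}$ is the first-order theory with equality in the language $\{0,S,+,\times\}$ axiomatized by: $\forall x\colon \neg\, Sx = 0$; $\forall x,y\colon Sx = Sy \rightarrow x = y$; $\forall x\colon x = 0 \lor \exists y\colon Sy = x$; $\forall x\colon x + 0 = x$; $\forall x,y\colon x + Sy = S(x+y)$; $\forall x\colon x \times 0 = 0$; $\forall x,y\colon x \times Sy = x + (x\times y)$. A theory is a set of sentences closed under logical consequence; an extension of $\mathsf{Q}$ is a theory containing it (possibly in an expanded language). Numerals: $\overline{n} = S\cdots S0$ ($n$ times $S$). A partial function $f\colon\mathbb{N}^k\to\mathbb{N}$ is represented in $T$ if there is a formula $\langle f\rangle(x_1,\dots,x_k,y)$ such that whenever $f(\mathbf{x}) = y$, $T \vdash \exists! y'\colon \langle f\rangle(\overline{\mathbf{x}}, y') \land \langle f\rangle(\overline{\mathbf{x}}, \overline{y})$, where $\exists! y\colon P(y) :\equiv \exists y\colon P(y) \land \forall z\colon P(z) \rightarrow z = y$. *)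

From Stdlib Require Import Arith Fin.

Set Implicit Arguments.

(* Syntax: the language {0,S,+,x} expanded by function symbols F n and
   relation symbols P n of arity n.  Variables are de Bruijn indices.   *)
Section Syntax.
Variables (F P : nat -> Type).

Inductive term : Type :=
| var (n : nat)
| tzero
| tsucc (t : term)
| tplus (t1 t2 : term)
| ttimes (t1 t2 : term)
| func (n : nat) (f : F n) (args : Fin.t n -> term).

Inductive form : Type :=
| Fal
| Eq (t1 t2 : term)
| Rel (n : nat) (p : P n) (args : Fin.t n -> term)
| Neg (A : form)
| And (A B : form)
| Or (A B : form)
| Imp (A B : form)
| All (A : form)
| Ex (A : form).

Fixpoint tbound (b : nat) (t : term) : Prop :=
  match t with
  | var n => n < b
  | tzero => True
  | tsucc t => tbound b t
  | tplus t1 t2 => tbound b t1 /\ tbound b t2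
  | ttimes t1 t2 => tbound b t1 /\ tbound b t2
  | func f a => forall i, tbound b (a i)
  end.

Fixpoint fbound (b : nat) (A : form) : Prop :=
  match A with
  | Fal => True
  | Eq t1 t2 => tbound b t1 /\ tbound b t2
  | Rel p a => forall i, tbound b (a i)
  | Neg A => fbound b A
  | And A B | Or A B | Imp A B => fbound b A /\ fbound b B
  | All A | Ex A => fbound (S b) A
  end.

Definition sentence (A : form) : Prop := fbound 0 A.

Fixpoint tsubst (s : nat -> term) (t : term) : term :=
  match t with
  | var n => s n
  | tzero => tzero
  | tsucc t => tsucc (tsubst s t)
  | tplus t1 t2 => tplus (tsubst s t1) (tsubst s t2)
  | ttimes t1 t2 => ttimes (tsubst s t1) (tsubst s t2)
  | func f a => func f (fun i => tsubst s (a i))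
  end.

Definition up (s : nat -> term) : nat -> term :=
  fun n => match n with
           | 0 => var 0
           | S m => tsubst (fun j => var (S j)) (s m)
           end.

Fixpoint fsubst (s : nat -> term) (A : form) : form :=
  match A with
  | Fal => Fal
  | Eq t1 t2 => Eq (tsubst s t1) (tsubst s t2)
  | Rel p a => Rel p (fun i => tsubst s (a i))
  | Neg A => Neg (fsubst s A)
  | And A B => And (fsubst s A) (fsubst s B)
  | Or A B => Or (fsubst s A) (fsubst s B)
  | Imp A B => Imp (fsubst s A) (fsubst s B)
  | All A => All (fsubst (up s) A)
  | Ex A => Ex (fsubst (up s) A)
  end.

Fixpoint num (n : nat) : term :=
  match n with 0 => tzero | S m => tsucc (num m) end.

(* Exists! y. A(y)  :=  Exists y. A(y) /\ forall z. A(z) -> z = y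
   (A has the quantified variable as de Bruijn index 0) *)
Definition ExU (A : form) : form :=
  Ex (And A (All (Imp (fsubst (fun n => match n with
                                         | 0 => var 0
                                         | S j => var (S (S j)) end) A)
                      (Eq (var 0) (var 1))))).

Record structure : Type := {
  dom : Type;
  i_zero : dom;
  i_succ : dom -> dom;
  i_plus : dom -> dom -> dom;
  i_times : dom -> dom -> dom;
  i_func : forall n, F n -> (Fin.t n -> dom) -> dom;
  i_rel : forall n, P n -> (Fin.t n -> dom) -> Prop }.

Definition scons {D : Type} (d : D) (rho : nat -> D) : nat -> D :=
  fun n => match n with 0 => d | S m => rho m end.

Fixpoint teval (M : structure) (rho : nat -> dom M) (t : term) : dom M :=
  match t with
  | var n => rho n
  | tzero => i_zero M
  | tsucc t => i_succ M (teval M rho t)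
  | tplus t1 t2 => i_plus M (teval M rho t1) (teval M rho t2)
  | ttimes t1 t2 => i_times M (teval M rho t1) (teval M rho t2)
  | func f a => i_func M f (fun i => teval M rho (a i))
  end.

Fixpoint sat (M : structure) (rho : nat -> dom M) (A : form) : Prop :=
  match A with
  | Fal => False
  | Eq t1 t2 => teval M rho t1 = teval M rho t2
  | Rel p a => i_rel M p (fun i => teval M rho (a i))
  | Neg A => ~ sat M rho A
  | And A B => sat M rho A /\ sat M rho B
  | Or A B => sat M rho A \/ sat M rho B
  | Imp A B => sat M rho A -> sat M rho B
  | All A => forall d : dom M, sat M (scons d rho) A
  | Ex A => exists d : dom M, sat M (scons d rho) A
  end.

Definition entails (T : form -> Prop) (A : form) : Prop :=
  forall M : structure,
    (forall B rho, T B -> sat M rho B) -> forall rho, sat M rho A.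

Definition is_theory (T : form -> Prop) : Prop :=
  (forall A, T A -> sentence A) /\
  (forall A, sentence A -> entails T A -> T A).

Definition Qax (A : form) : Prop :=
  A = All (Neg (Eq (tsucc (var 0)) tzero)) \/
  A = All (All (Imp (Eq (tsucc (var 1)) (tsucc (var 0))) (Eq (var 1) (var 0)))) \/
  A = All (Or (Eq (var 0) tzero) (Ex (Eq (tsucc (var 0)) (var 1)))) \/
  A = All (Eq (tplus (var 0) tzero) (var 0)) \/
  A = All (All (Eq (tplus (var 1) (tsucc (var 0))) (tsucc (tplus (var 1) (var 0))))) \/
  A = All (Eq (ttimes (var 0) tzero) tzero) \/
  A = All (All (Eq (ttimes (var 1) (tsucc (var 0)))
                   (tplus (var 1) (ttimes (var 1) (var 0))))).

Definition extension_of_Q (T : form -> Prop) : Prop :=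
  is_theory T /\ (forall A, Qax A -> T A).

(* Representability.  A partial function N^k -> N is a functional
   relation on (Fin.t k -> nat) * nat.  In the representing formula,
   de Bruijn variable 0 is y and variable (S i) is x_(i+1) (i < k). *)
Definition vnth {k : nat} (x : Fin.t k -> nat) (j : nat) : nat :=
  match Fin.of_nat j k with
  | inleft i => x i
  | inright _ => 0
  end.

Definition inst {k : nat} (x : Fin.t k -> nat) (s : term) : nat -> term :=
  fun n => match n with 0 => s | S j => num (vnth x j) end.

Definition rep_sentence {k : nat} (A : form) (x : Fin.t k -> nat) (y : nat)
  : form :=
  And (ExU (fsubst (inst x (var 0)) A)) (fsubst (inst x (num y)) A).

(* T is closed under consequence, so T |- B is B \in T *)
Definition represents (T : form -> Prop) {k : nat}
  (f : (Fin.t k -> nat) -> nat -> Prop) : Prop :=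
  exists A : form, fbound (S k) A /\
    forall x y, f x y -> T (rep_sentence A x y).

End Syntax.


Definition partial_function {k : nat} (f : (Fin.t k -> nat) -> nat -> Prop)
  : Prop := forall x y1 y2, f x y1 -> f x y2 -> y1 = y2.

Definition vcons {k : nat} (a : nat) (x : Fin.t k -> nat) : Fin.t (S k) -> nat :=
  fun i => Fin.caseS' i (fun _ => nat) a x.

Definition vtail {k : nat} (v : Fin.t (S k) -> nat) : Fin.t k -> nat :=
  fun i => v (Fin.FS i).

Inductive prog (m : nat) : nat -> Type :=
| pZero (k : nat) : prog m k
| pSucc : prog m 1
| pProj (k : nat) (i : Fin.t k) : prog m k
| pOracle : prog m m
| pComp (k j : nat) (h : prog m j) (gs : Fin.t j -> prog m k) : prog m k
| pRec (k : nat) (b : prog m k) (s : prog m (S (S k))) : prog m (S k)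
| pMu (k : nat) (h : prog m (S k)) : prog m k.

Inductive eval (m : nat) (g : (Fin.t m -> nat) -> nat -> Prop)
  : forall k, prog m k -> (Fin.t k -> nat) -> nat -> Prop :=
| ev_zero (k : nat) (x : Fin.t k -> nat) : eval g (pZero m k) x 0
| ev_succ (x : Fin.t 1 -> nat) : eval g (pSucc m) x (S (x Fin.F1))
| ev_proj (k : nat) (i : Fin.t k) (x : Fin.t k -> nat) :
    eval g (pProj m i) x (x i)
| ev_oracle (x : Fin.t m -> nat) (y : nat) : g x y -> eval g (pOracle m) x y
| ev_comp (k j : nat) (h : prog m j) (gs : Fin.t j -> prog m k)
    (x : Fin.t k -> nat) (ys : Fin.t j -> nat) (z : nat) :
    (forall i, eval g (gs i) x (ys i)) -> eval g h ys z ->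
    eval g (@pComp m k j h gs) x z
| ev_rec0 (k : nat) (b : prog m k) (s : prog m (S (S k)))
    (v : Fin.t (S k) -> nat) (y : nat) :
    v Fin.F1 = 0 -> eval g b (vtail v) y ->
    eval g (@pRec m k b s) v y
| ev_recS (k : nat) (b : prog m k) (s : prog m (S (S k)))
    (v : Fin.t (S k) -> nat) (n z y : nat) :
    v Fin.F1 = S n ->
    eval g (@pRec m k b s) (vcons n (vtail v)) z ->
    eval g s (vcons n (vcons z (vtail v))) y ->
    eval g (@pRec m k b s) v y
| ev_mu (k : nat) (h : prog m (S k)) (x : Fin.t k -> nat) (y : nat) :
    eval g h (vcons y x) 0 ->
    (forall i, i < y -> exists z, eval g h (vcons i x) (S z)) ->
    eval g (@pMu m k h) x y.

Definition oracle_computable {m k : nat} (g : (Fin.t m -> nat) -> nat -> Prop)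
  (f : (Fin.t k -> nat) -> nat -> Prop) : Prop :=
  exists p : prog m k, forall x y, f x y <-> eval g p x y.

From Stdlib Require Import Arith Lia List FunctionalExtensionality Setoid.

(* A program [p] with oracle [g] is translated into a formula [prog_form Ag p], where [Ag]
   represents [g]: composition quantifies existentially over the intermediate values,
   minimisation says "h(x, y) = 0 and h(x, i) is a successor for all i < y", and primitive
   recursion codes the course of values by Goedel's beta function.  By induction on the
   evaluation, in every model of Q the formula defines the computed value at numeral arguments;
   this needs only the arithmetic of numerals in models of Q, in particular that every element
   is either a numeral [<= n] or above the numeral [n].  As T is closed under consequence, the representing sentences lie in T. *)

Fixpoint prod_upto (m : nat -> nat) (n : nat) : nat :=
  match n with 0 => m 0 | S n' => prod_upto m n' * m (S n') end.

Lemma prod_upto_pos m n : (forall i, 0 < m i) -> 0 < prod_upto m n.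
Proof. intros Hm; induction n; simpl; [apply Hm|]. specialize (Hm (S n)); nia. Qed.

Lemma divide_prod_upto m n i : i <= n -> Nat.divide (m i) (prod_upto m n).
Proof.
  induction n; intros Hi; simpl.
  - replace i with 0 by lia; apply Nat.divide_refl.
  - destruct (Nat.eq_dec i (S n)) as [->|Hne].
    + apply Nat.divide_factor_r.
    + apply Nat.divide_mul_l, IHn; lia.
Qed.

Lemma coprime_mul_l a b c :
  Nat.gcd a c = 1 -> Nat.gcd b c = 1 -> Nat.gcd (a * b) c = 1.
Proof.
  intros Hac Hbc; set (e := Nat.gcd (a * b) c).
  assert (Hec : Nat.divide e c) by apply Nat.gcd_divide_r.
  assert (Hea : Nat.gcd e a = 1).
  { apply Nat.divide_1_r; rewrite <- Hac.
    apply Nat.gcd_greatest; [apply Nat.gcd_divide_r|].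
    eapply Nat.divide_trans; [apply Nat.gcd_divide_l|exact Hec]. }
  assert (Heb : Nat.divide e b) by (eapply Nat.gauss; [apply Nat.gcd_divide_l|exact Hea]).
  apply Nat.divide_1_r; rewrite <- Hbc; apply Nat.gcd_greatest; assumption.
Qed.

Lemma coprime_prod_upto m n :
  (forall i, i <= n -> Nat.gcd (m i) (m (S n)) = 1) ->
  Nat.gcd (prod_upto m n) (m (S n)) = 1.
Proof.
  intros Hm; assert (G : forall n', n' <= n -> Nat.gcd (prod_upto m n') (m (S n)) = 1);
    [|apply G; lia].
  induction n'; intros Hn; simpl; [apply Hm; lia|].
  apply coprime_mul_l; [apply IHn'|apply Hm]; lia.
Qed.

Lemma chinese_remainder (m val : nat -> nat) n :
  (forall i, 0 < m i) -> (forall i j, i < j <= n -> Nat.gcd (m i) (m j) = 1) ->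
  exists c, forall i, i <= n -> c mod m i = val i mod m i.
Proof.
  intros Hpos Hcop; induction n as [|n IH].
  - exists (val 0); intros i Hi; replace i with 0 by lia; reflexivity.
  - destruct IH as [c Hc]; [intros; apply Hcop; lia|].
    set (p := prod_upto m n); set (q := m (S n)).
    assert (Hp : 0 < p) by (apply prod_upto_pos; assumption).
    assert (Hq : 0 < q) by apply Hpos.
    assert (Hpq : Nat.gcd p q = 1) by (apply coprime_prod_upto; intros; apply Hcop; lia).
    destruct (Nat.gcd_bezout_pos p q Hp) as [u [w Huw]]; rewrite Hpq in Huw.
    (* [u * p] is [0] modulo every [m i], [i <= n], and [1] modulo [q]. *)
    set (t := q - c mod q + val (S n)).
    exists (c + u * p * t); intros i Hi.
    destruct (Nat.eq_dec i (S n)) as [->|Hne].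
    + fold q; rewrite Huw.
      assert (E : c + (1 + w * q) * t = val (S n) + (c / q + 1 + w * t) * q).
      { unfold t; pose proof (Nat.div_mod_eq c q);
          pose proof (Nat.mod_upper_bound c q ltac:(lia)); nia. }
      rewrite E, Nat.Div0.mod_add; reflexivity.
    + destruct (divide_prod_upto m n i ltac:(lia)) as [r Hr]; fold p in Hr.
      rewrite Hr; replace (u * (r * m i) * t) with (u * r * t * m i) by ring.
      rewrite Nat.Div0.mod_add; apply Hc; lia.
Qed.

Lemma divide_fact a n : 0 < a <= n -> Nat.divide a (fact n).
Proof.
  induction n; intros Ha; [lia|]; change (fact (S n)) with (S n * fact n).
  destruct (Nat.eq_dec a (S n)) as [->|Hne].
  - apply Nat.divide_factor_l.
  - apply Nat.divide_mul_r, IHn; lia.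
Qed.

(* A common divisor of [1 + d(i+1)] and [1 + d(j+1)] divides [j - i], hence [d]. *)
Lemma coprime_beta_moduli d n i j :
  (forall a, 0 < a <= n -> Nat.divide a d) ->
  i < j <= n -> Nat.gcd (S (d * S i)) (S (d * S j)) = 1.
Proof.
  intros Hd Hij; set (e := Nat.gcd _ _).
  assert (Hi : Nat.divide e (S (d * S i))) by apply Nat.gcd_divide_l.
  assert (Hj : Nat.divide e (S (d * S j))) by apply Nat.gcd_divide_r.
  assert (Hji : Nat.divide e (j - i)).
  { replace (j - i) with (S j * S (d * S i) - S i * S (d * S j)) by nia.
    apply Nat.divide_sub_r; apply Nat.divide_mul_r; assumption. }
  assert (Hed : Nat.divide e (d * S i)).
  { apply Nat.divide_mul_l; eapply Nat.divide_trans; [exact Hji|apply Hd; lia]. }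
  apply Nat.divide_1_r; replace 1 with (S (d * S i) - d * S i) by lia.
  apply Nat.divide_sub_r; assumption.
Qed.

Lemma goedel_beta (n : nat) (val : nat -> nat) :
  exists c d, forall i, i <= n -> c mod S (d * S i) = val i.
Proof.
  set (N := n + fold_right max 0 (map val (seq 0 (S n)))).
  assert (Hval : forall i, i <= n -> val i <= N).
  { intros i Hi; unfold N.
    assert (Hin : In (val i) (map val (seq 0 (S n))))
      by (apply in_map, in_seq; lia).
    clear -Hin; induction (map val (seq 0 (S n))) as [|a l IH]; simpl in *; [tauto|].
    destruct Hin as [->|Hin]; [lia|specialize (IH Hin); lia]. }
  set (d := fact (S N)).
  assert (HN : S N <= d) by (clear; induction N; simpl in *; lia).
  destruct (chinese_remainder (fun i => S (d * S i)) val n) as [c Hc].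
  - intros; lia.
  - intros i j Hij; apply (coprime_beta_moduli d n); [|assumption].
    intros; apply divide_fact; lia.
  - exists c, d; intros i Hi; rewrite Hc by assumption.
    apply Nat.mod_small; specialize (Hval i Hi); nia.
Qed.

Arguments var {F} n.
Arguments tzero {F}.
Arguments num {F} n.
Arguments Fal {F P}.
Arguments Eq {F P} t1 t2.

Section Semantics.
Context {F P : nat -> Type}.
Implicit Types (M : structure F P) (t : term F) (A : form F P).

Lemma teval_tsubst M rho s t :
  teval M rho (tsubst s t) = teval M (fun n => teval M rho (s n)) t.
Proof.
  induction t; simpl; try congruence.
  f_equal; apply functional_extensionality; auto.
Qed.

Lemma sat_fsubst M A : forall rho s,
  sat M rho (fsubst s A) <-> sat M (fun n => teval M rho (s n)) A.
Proof.
  assert (Hup : forall rho s d,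
    (fun n => teval M (scons d rho) (up s n)) = scons d (fun n => teval M rho (s n))).
  { intros rho s d; apply functional_extensionality; intros [|n]; simpl; [reflexivity|].
    apply teval_tsubst. }
  induction A; intros rho s; simpl;
    try (rewrite ?IHA, ?IHA1, ?IHA2; tauto).
  - rewrite !teval_tsubst; tauto.
  - replace (fun i => teval M rho (tsubst s (args i)))
      with (fun i => teval M (fun n => teval M rho (s n)) (args i)); [tauto|].
    apply functional_extensionality; intros; symmetry; apply teval_tsubst.
  - split; intros H d; specialize (H d); rewrite IHA, Hup in *; exact H.
  - split; intros [d H]; exists d; rewrite IHA, Hup in *; exact H.
Qed.

Lemma tsubst_bound t : forall b b' s, tbound b t ->
  (forall n, n < b -> tbound b' (s n)) -> tbound b' (tsubst s t).
Proof.
  induction t; simpl; intros b b' s Ht Hs; try tauto; eauto;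
    destruct Ht; split; eauto.
Qed.

Lemma fsubst_bound A : forall b b' s, fbound b A ->
  (forall n, n < b -> tbound b' (s n)) -> fbound b' (fsubst s A).
Proof.
  assert (Hup : forall b b' (s : nat -> term F), (forall n, n < b -> tbound b' (s n)) ->
     forall n, n < S b -> tbound (S b') (up s n)).
  { intros b b' s Hs [|n] Hn; simpl; [lia|].
    eapply tsubst_bound; [apply Hs; lia|]; simpl; intros; lia. }
  induction A; simpl; intros b b' s H Hs; try tauto; eauto;
    try (destruct H; split; eauto using tsubst_bound).
  intros i; eauto using tsubst_bound.
Qed.

Lemma tbound_num b n : tbound b (num (F:=F) n).
Proof. induction n; simpl; auto. Qed.

End Semantics.

Fixpoint fin_to_nat {n} (i : Fin.t n) : nat :=
  match i with Fin.F1 => 0 | Fin.FS j => S (fin_to_nat j) end.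

Lemma fin_to_nat_lt {n} (i : Fin.t n) : fin_to_nat i < n.
Proof. induction i; simpl; lia. Qed.

Lemma fin_to_nat_surj {n} l : l < n -> exists i : Fin.t n, fin_to_nat i = l.
Proof.
  revert l; induction n; intros [|l] Hl; try lia.
  - exists Fin.F1; reflexivity.
  - destruct (IHn l ltac:(lia)) as [i Hi]; exists (Fin.FS i); simpl; congruence.
Qed.

Lemma vnth_S {k} (x : Fin.t (S k) -> nat) l : vnth x (S l) = vnth (vtail x) l.
Proof. unfold vnth; simpl; destruct (Fin.of_nat l k); reflexivity. Qed.

Lemma vnth_fin_to_nat {k} (i : Fin.t k) (x : Fin.t k -> nat) : vnth x (fin_to_nat i) = x i.
Proof. induction i; simpl; [reflexivity|]; rewrite vnth_S; apply IHi. Qed.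

Lemma vnth_ge {k} (x : Fin.t k -> nat) l : k <= l -> vnth x l = 0.
Proof.
  revert x l; induction k; intros x [|l] Hl; try reflexivity; [lia|].
  rewrite vnth_S; apply IHk; lia.
Qed.

Lemma vcons_eta {k} (v : Fin.t (S k) -> nat) : vcons (v Fin.F1) (vtail v) = v.
Proof. apply functional_extensionality; intros i; pattern i; apply Fin.caseS'; reflexivity. Qed.

Section Numerals.
Context {F P : nat -> Type} (M : structure F P).

Fixpoint numeral (n : nat) : dom M :=
  match n with 0 => i_zero M | S n' => i_succ M (numeral n') end.

Lemma teval_num rho n : teval M rho (num n) = numeral n.
Proof. induction n; simpl; congruence. Qed.

Definition env_of {k} (x : Fin.t k -> nat) : nat -> dom M := fun j => numeral (vnth x j).

Lemma env_of_vcons {k} a (x : Fin.t k -> nat) : env_of (vcons a x) = scons (numeral a) (env_of x).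
Proof.
  apply functional_extensionality; intros [|l]; unfold env_of; [reflexivity|].
  rewrite vnth_S; reflexivity.
Qed.

Lemma sat_inst {k} (x : Fin.t k -> nat) t A rho :
  sat M rho (fsubst (inst x t) A) <-> sat M (scons (teval M rho t) (env_of x)) A.
Proof.
  rewrite sat_fsubst.
  replace (fun n => teval M rho (inst x t n)) with (scons (teval M rho t) (env_of x)); [tauto|].
  apply functional_extensionality; intros [|n]; simpl; [reflexivity|]; symmetry; apply teval_num.
Qed.

Definition defines (A : form F P) {k} (x : Fin.t k -> nat) (y : nat) : Prop :=
  forall d, sat M (scons d (env_of x)) A <-> d = numeral y.

Lemma sat_ExU A rho : sat M rho (ExU A) <->
  exists d, sat M (scons d rho) A /\ forall e, sat M (scons e rho) A -> e = d.
Proof.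
  unfold ExU; simpl.
  assert (E : forall e d, sat M (scons e (scons d rho))
      (fsubst (fun n => match n with 0 => var 0 | S j => var (S (S j)) end) A)
      <-> sat M (scons e rho) A).
  { intros e d; rewrite sat_fsubst.
    replace (fun n => _) with (scons e rho); [tauto|].
    apply functional_extensionality; intros [|n]; reflexivity. }
  setoid_rewrite E; tauto.
Qed.

Lemma sat_rep_sentence A {k} (x : Fin.t k -> nat) y rho :
  sat M rho (rep_sentence A x y) <-> defines A x y.
Proof.
  unfold rep_sentence, defines; cbn [sat]; rewrite sat_ExU.
  setoid_rewrite sat_inst; simpl; rewrite teval_num.
  split.
  - intros [[d [Hd Hu]] Hy] e; split; [|intros ->; exact Hy].
    intros He; rewrite (Hu e He); symmetry; apply Hu, Hy.
  - intros H; split; [exists (numeral y); split|]; intros; apply H; auto.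
Qed.

End Numerals.


Lemma rep_sentence_closed {F P} (A : form F P) {k} (x : Fin.t k -> nat) y :
  fbound (S k) A -> sentence (rep_sentence A x y).
Proof.
  intros H; unfold sentence, rep_sentence, ExU; simpl.
  assert (HI : forall t, tbound 1 t -> fbound 1 (fsubst (inst x t) A)).
  { intros t Ht; eapply fsubst_bound; [exact H|].
    intros [|n] Hn; simpl; auto using tbound_num. }
  repeat split; simpl; try lia.
  - apply HI; simpl; lia.
  - eapply fsubst_bound; [apply HI; simpl; lia|]; intros [|n] Hn; simpl; lia.
  - eapply fsubst_bound; [exact H|]; intros [|n] Hn; simpl; apply tbound_num.
Qed.

Definition is_model {F P} (T : form F P -> Prop) (M : structure F P) : Prop :=
  forall B rho, T B -> sat M rho B.

Lemma represents_iff_defines {F P} (T : form F P -> Prop) {k} (f : (Fin.t k -> nat) -> nat -> Prop) :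
  is_theory T -> represents T f <->
  exists A, fbound (S k) A /\ forall M x y, is_model T M -> f x y -> defines M A x y.
Proof.
  intros [HTs HTc]; split; intros [A [HA Hf]]; exists A; split; auto.
  - intros M x y HM Hxy; apply (sat_rep_sentence M A x y (fun _ => i_zero M)), HM, Hf, Hxy.
  - intros x y Hxy; apply HTc; [apply rep_sentence_closed, HA|].
    intros M HM rho; apply sat_rep_sentence, Hf; assumption.
Qed.

Record Q_model {F P} (M : structure F P) : Prop := {
  succ_neq_zero : forall a, i_succ M a <> i_zero M;
  succ_inj : forall a b, i_succ M a = i_succ M b -> a = b;
  zero_or_succ : forall a, a = i_zero M \/ exists b, i_succ M b = a;
  plus_zero : forall a, i_plus M a (i_zero M) = a;
  plus_succ : forall a b, i_plus M a (i_succ M b) = i_succ M (i_plus M a b);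
  times_zero : forall a, i_times M a (i_zero M) = i_zero M;
  times_succ : forall a b, i_times M a (i_succ M b) = i_plus M a (i_times M a b) }.

Arguments succ_neq_zero {F P M}. Arguments succ_inj {F P M}. Arguments zero_or_succ {F P M}.
Arguments plus_zero {F P M}. Arguments plus_succ {F P M}.
Arguments times_zero {F P M}. Arguments times_succ {F P M}.

Lemma Q_model_of_model {F P} (T : form F P -> Prop) (M : structure F P) :
  extension_of_Q T -> is_model T M -> Q_model M.
Proof.
  intros [_ HQ] HM.
  assert (G : forall A, Qax A -> sat M (fun _ => i_zero M) A) by (intros; apply HM, HQ; assumption).
  constructor.
  - exact (G _ ltac:(left; reflexivity)).
  - exact (G _ ltac:(do 1 right; left; reflexivity)).
  - exact (G _ ltac:(do 2 right; left; reflexivity)).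
  - exact (G _ ltac:(do 3 right; left; reflexivity)).
  - exact (G _ ltac:(do 4 right; left; reflexivity)).
  - exact (G _ ltac:(do 5 right; left; reflexivity)).
  - exact (G _ ltac:(do 6 right; reflexivity)).
Qed.

Definition lt_in {F P} (M : structure F P) (a b : dom M) : Prop :=
  exists z, i_plus M (i_succ M z) a = b.

(* [v] is the remainder of [c] modulo [1 + d (1 + i)], i.e. the [i]-th entry of the sequence
   coded by [(c, d)]. *)
Definition beta_rel {F P} (M : structure F P) (v i d c : dom M) : Prop :=
  (exists q, i_plus M (i_times M q (i_succ M (i_times M d (i_succ M i)))) v = c) /\
  lt_in M v (i_succ M (i_times M d (i_succ M i))).

Section QArithmetic.
Context {F P : nat -> Type} (M : structure F P) (HQ : Q_model M).
Local Notation numeral := (numeral M).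
Local Notation succ := (i_succ M).
Local Notation plus := (i_plus M).
Local Notation times := (i_times M).

Lemma numeral_plus a b : plus (numeral a) (numeral b) = numeral (a + b).
Proof.
  induction b; simpl; [rewrite (plus_zero HQ), Nat.add_0_r; reflexivity|].
  rewrite (plus_succ HQ), IHb, Nat.add_succ_r; reflexivity.
Qed.

Lemma numeral_times a b : times (numeral a) (numeral b) = numeral (a * b).
Proof.
  induction b; simpl; [rewrite (times_zero HQ), Nat.mul_0_r; reflexivity|].
  rewrite (times_succ HQ), IHb, numeral_plus; f_equal; lia.
Qed.

Lemma numeral_inj a b : numeral a = numeral b -> a = b.
Proof.
  revert b; induction a; intros [|b] H; simpl in H; auto.
  - exfalso; apply (succ_neq_zero HQ (numeral b)); auto.
  - exfalso; apply (succ_neq_zero HQ (numeral a)); auto.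
  - f_equal; apply IHa, (succ_inj HQ), H.
Qed.

Lemma plus_eq_numeral n a b :
  plus a b = numeral n -> exists a' b', a = numeral a' /\ b = numeral b' /\ a' + b' = n.
Proof.
  revert a b; induction n; intros a b H; destruct (zero_or_succ HQ b) as [->|[b' <-]];
    rewrite ?(plus_zero HQ), ?(plus_succ HQ) in H.
  - exists 0, 0; auto.
  - exfalso; apply (succ_neq_zero HQ _ H).
  - exists (S n), 0; simpl; auto.
  - apply (succ_inj HQ) in H.
    destruct (IHn _ _ H) as [a' [b'' [-> [-> E]]]].
    exists a', (S b''); simpl; repeat split; lia.
Qed.

Lemma lt_numeral_inv d n : lt_in M d (numeral n) -> exists i, i < n /\ d = numeral i.
Proof.
  intros [z H]; destruct (plus_eq_numeral _ _ _ H) as [[|a'] [b' [Ha [Hb E]]]].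
  - exfalso; apply (succ_neq_zero HQ _ Ha).
  - exists b'; split; [lia|assumption].
Qed.

Lemma lt_numeral i n : i < n -> lt_in M (numeral i) (numeral n).
Proof.
  intros H; exists (numeral (n - S i)).
  change (succ (numeral (n - S i))) with (numeral (S (n - S i))).
  rewrite numeral_plus; f_equal; lia.
Qed.

Lemma succ_plus_numeral a n : plus (succ a) (numeral n) = succ (plus a (numeral n)).
Proof.
  induction n; simpl; [rewrite !(plus_zero HQ); reflexivity|].
  rewrite !(plus_succ HQ), IHn; reflexivity.
Qed.

Lemma le_numeral_or_gt y d : (exists i, i <= y /\ d = numeral i) \/ lt_in M (numeral y) d.
Proof.
  revert d; induction y; intros d.
  - destruct (zero_or_succ HQ d) as [->|[z <-]]; [left; exists 0; auto|].
    right; exists z; apply (plus_zero HQ).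
  - destruct (IHy d) as [[i [Hi ->]]|[z Hz]]; [left; exists i; split; auto|].
    destruct (zero_or_succ HQ z) as [->|[z' <-]].
    + left; exists (S y); split; auto.
      rewrite <- Hz; change (succ (i_zero M)) with (numeral 1); rewrite numeral_plus; reflexivity.
    + right; exists z'; simpl; rewrite (plus_succ HQ), <- Hz; symmetry; apply succ_plus_numeral.
Qed.

Lemma beta_rel_numeral c d i w :
  beta_rel M w (numeral i) (numeral d) (numeral c) <-> w = numeral (c mod S (d * S i)).
Proof.
  unfold beta_rel.
  replace (succ (times (numeral d) (succ (numeral i)))) with (numeral (S (d * S i)))
    by (simpl; rewrite <- numeral_times; reflexivity).
  set (e := d * S i); split.
  - intros [[q Hq] Hlt].
    destruct (lt_numeral_inv _ _ Hlt) as [v [Hv ->]].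
    destruct (plus_eq_numeral _ _ _ Hq) as [a [b [Ha [Hb E]]]].
    apply numeral_inj in Hb; subst b.
    assert (Hq' : exists q', q = numeral q').
    { simpl in Ha; rewrite (times_succ HQ) in Ha.
      destruct (plus_eq_numeral _ _ _ Ha) as [q' [_ [-> _]]]; eauto. }
    destruct Hq' as [q' ->]; rewrite numeral_times in Ha; apply numeral_inj in Ha; subst a.
    f_equal; apply (Nat.mod_unique c (S e) q'); lia.
  - intros ->; split.
    + exists (numeral (c / S e)); rewrite numeral_times, numeral_plus; f_equal.
      pose proof (Nat.div_mod_eq c (S e)); lia.
    + apply lt_numeral, Nat.mod_upper_bound; lia.
Qed.

End QArithmetic.

Section Formulas.
Context {F P : nat -> Type}.
Local Notation term := (term F).
Local Notation form := (form F P).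

Definition beta_form : form :=
  And (Ex (Eq (tplus (ttimes (var 0) (tsucc (ttimes (var 3) (tsucc (var 2))))) (var 1)) (var 4)))
      (Ex (Eq (tplus (tsucc (var 0)) (var 1)) (tsucc (ttimes (var 3) (tsucc (var 2)))))).

Definition beta_f (v i d c : term) : form :=
  fsubst (fun n => match n with 0 => v | 1 => i | 2 => d | 3 => c | _ => tzero end) beta_form.

Fixpoint exists_n (j : nat) (B : form) : form :=
  match j with 0 => B | S j' => Ex (exists_n j' B) end.

Fixpoint conj_fin (j : nat) : (Fin.t j -> form) -> form :=
  match j with
  | 0 => fun _ => Neg Fal
  | S j' => fun B => And (B Fin.F1) (conj_fin j' (fun i => B (Fin.FS i)))
  end.

(* Variables [0 .. j-1] hold the values of the inner functions, which [As] defines from the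
   arguments (shifted past them and past the output [j]); [Ah] then reads them as its arguments.
   Variables of [Ah] beyond its arity are sent to [0]. *)
Definition comp_form (j : nat) (As : Fin.t j -> form) (Ah : form) : form :=
  exists_n j (And
    (conj_fin j (fun i =>
       fsubst (fun n => match n with 0 => var (fin_to_nat i) | S l => var (j + S l) end) (As i)))
    (fsubst (fun n => match n with 0 => var j | S l => if l <? j then var l else tzero end) Ah)).

Definition mu_form (Ah : form) : form :=
  And (fsubst (fun n => match n with 0 => tzero | 1 => var 0 | S (S l) => var (S l) end) Ah)
      (All (Imp (Ex (Eq (tplus (tsucc (var 0)) (var 1)) (var 2)))
                (Ex (fsubst (fun n => match n with
                             | 0 => tsucc (var 0) | 1 => var 1 | S (S l) => var (S (S (S l))) end) Ah)))).

(* A sequence coded by [(c, d)] through [beta_rel] is defined up to the recursion argument,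
   starts with a value of [Ab], proceeds by [As], and ends with the output; see [sat_rec_form]. *)
Definition rec_form (Ab As : form) : form :=
  Ex (Ex (And
    (All (Imp (Ex (Eq (tplus (tsucc (var 0)) (var 1)) (tsucc (var 5))))
              (Ex (beta_f (var 0) (var 1) (var 2) (var 3)))))
    (And
      (All (Imp (beta_f (var 0) tzero (var 1) (var 2))
                (fsubst (fun n => match n with 0 => var 0 | S l => var (5 + l) end) Ab)))
    (And
      (All (Imp (Ex (Eq (tplus (tsucc (var 0)) (var 1)) (var 5)))
        (All (All (Imp (beta_f (var 1) (var 2) (var 3) (var 4))
                  (Imp (beta_f (var 0) (tsucc (var 2)) (var 3) (var 4))
                       (fsubst (fun n => match n with
                                | 0 => var 0 | 1 => var 2 | 2 => var 1
                                | S (S (S l)) => var (7 + l) end) As)))))))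
      (beta_f (var 2) (var 3) (var 0) (var 1)))))).

Fixpoint prog_form {m} (Ag : form) {k} (p : prog m k) : form :=
  match p with
  | pZero _ _ => Eq (var 0) tzero
  | pSucc _ => Eq (var 0) (tsucc (var 1))
  | pProj _ i => Eq (var 0) (var (S (fin_to_nat i)))
  | pOracle _ => Ag
  | @pComp _ _ j h gs => comp_form j (fun i => prog_form Ag (gs i)) (prog_form Ag h)
  | pRec b s => rec_form (prog_form Ag b) (prog_form Ag s)
  | pMu h => mu_form (prog_form Ag h)
  end.

Lemma beta_f_bound b (v i d c : term) :
  tbound b v -> tbound b i -> tbound b d -> tbound b c -> fbound b (beta_f v i d c).
Proof.
  intros; eapply fsubst_bound with (b := 5); [simpl; repeat split; lia|].
  intros [|[|[|[|n]]]] Hn; simpl; auto.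
Qed.

Lemma exists_n_bound j : forall b (B : form), fbound (j + b) B -> fbound b (exists_n j B).
Proof.
  induction j; intros b B H; simpl; [assumption|].
  apply IHj; rewrite Nat.add_succ_r; assumption.
Qed.

Lemma conj_fin_bound j : forall b (B : Fin.t j -> form), (forall i, fbound b (B i)) ->
  fbound b (conj_fin j B).
Proof. induction j; simpl; auto. Qed.

Lemma prog_form_bound {m} (Ag : form) : fbound (S m) Ag ->
  forall k (p : prog m k), fbound (S k) (prog_form Ag p).
Proof.
  intros HAg k p; induction p; simpl.
  - split; simpl; auto; lia.
  - split; simpl; lia.
  - split; simpl; pose proof (fin_to_nat_lt i); lia.
  - exact HAg.
  - apply exists_n_bound; split.
    + apply conj_fin_bound; intros i; eapply fsubst_bound; [apply H|].
      intros [|l] Hl; simpl; pose proof (fin_to_nat_lt i); lia.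
    + eapply fsubst_bound; [apply IHp|].
      intros [|l] Hl; simpl; [lia|]; destruct (Nat.ltb_spec l j); simpl; lia.
  - repeat split; simpl; try lia; try (apply beta_f_bound; simpl; lia).
    + eapply fsubst_bound; [apply IHp1|]; intros [|l] Hl; simpl; lia.
    + eapply fsubst_bound; [apply IHp2|]; intros [|[|[|l]]] Hl; simpl; lia.
  - repeat split; simpl; try lia.
    + eapply fsubst_bound; [apply IHp|]; intros [|[|l]] Hl; simpl; auto; lia.
    + eapply fsubst_bound; [apply IHp|]; intros [|[|l]] Hl; simpl; lia.
Qed.

Variable M : structure F P.

Lemma sat_beta_f rho v i d c :
  sat M rho (beta_f v i d c) <->
  beta_rel M (teval M rho v) (teval M rho i) (teval M rho d) (teval M rho c).
Proof. unfold beta_f; rewrite sat_fsubst; reflexivity. Qed.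

Definition prepend (j : nat) (ds rho : nat -> dom M) : nat -> dom M :=
  fun n => if n <? j then ds n else rho (n - j).

Lemma prepend_S j ds d rho :
  prepend j ds (scons d rho) = prepend (S j) (fun n => if n <? j then ds n else d) rho.
Proof.
  apply functional_extensionality; intros n; unfold prepend.
  destruct (Nat.ltb_spec n j), (Nat.ltb_spec n (S j)); try lia; [reflexivity| |].
  - replace (n - j) with 0 by lia; reflexivity.
  - replace (n - j) with (S (n - S j)) by lia; reflexivity.
Qed.

Lemma sat_exists_n j : forall (B : form) rho,
  sat M rho (exists_n j B) <-> exists ds, sat M (prepend j ds rho) B.
Proof.
  induction j; intros B rho; simpl.
  - assert (E : forall ds, prepend 0 ds rho = rho).
    { intros ds; apply functional_extensionality; intros n; unfold prepend; simpl.
      rewrite Nat.sub_0_r; reflexivity. }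
    setoid_rewrite E; split; [exists (fun _ => i_zero M)|intros []]; auto.
  - setoid_rewrite IHj; setoid_rewrite prepend_S; split.
    + intros [d [ds H]]; eexists; exact H.
    + intros [ds H]; exists (ds j), ds.
      replace (prepend (S j) _ rho) with (prepend (S j) ds rho); [exact H|].
      apply functional_extensionality; intros n; unfold prepend.
      destruct (Nat.ltb_spec n (S j)), (Nat.ltb_spec n j); try reflexivity.
      replace n with j by lia; reflexivity.
Qed.

Lemma sat_conj_fin j : forall (B : Fin.t j -> form) rho,
  sat M rho (conj_fin j B) <-> forall i, sat M rho (B i).
Proof.
  induction j; intros B rho; simpl.
  - split; [intros _ i; inversion i|intros _ H; exact H].
  - rewrite IHj; split.
    + intros [H1 H2] i; pattern i; apply Fin.caseS'; auto.
    + intros H; split; auto.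
Qed.

End Formulas.

Lemma eval_inv {m} (g : (Fin.t m -> nat) -> nat -> Prop) k (p : prog m k) x y : eval g p x y ->
  match p in prog _ k0 return (Fin.t k0 -> nat) -> nat -> Prop with
  | pZero _ _ => fun _ y => y = 0
  | pSucc _ => fun x y => y = S (x Fin.F1)
  | pProj _ i => fun x y => y = x i
  | pOracle _ => fun x y => g x y
  | pComp h gs => fun x y => exists ys, (forall i, eval g (gs i) x (ys i)) /\ eval g h ys y
  | pRec b s => fun v y => (v Fin.F1 = 0 /\ eval g b (vtail v) y) \/
       exists n z, v Fin.F1 = S n /\ eval g (pRec b s) (vcons n (vtail v)) z /\
                   eval g s (vcons n (vcons z (vtail v))) y
  | pMu h => fun x y =>
       eval g h (vcons y x) 0 /\ forall i, i < y -> exists z, eval g h (vcons i x) (S z)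
  end x y.
Proof. intros H; destruct H; simpl; eauto 10. Qed.

Section ProgramsDefineTheirValues.
Context {F P : nat -> Type} (M : structure F P) (HQ : Q_model M).
Context {m : nat} (g : (Fin.t m -> nat) -> nat -> Prop) (Ag : form F P).
Hypothesis HAg : forall x y, g x y -> defines M Ag x y.

Lemma defines_comp k j (As : Fin.t j -> form F P) Ah (x : Fin.t k -> nat) ys z :
  (forall i, defines M (As i) x (ys i)) -> defines M Ah ys z ->
  defines M (comp_form j As Ah) x z.
Proof.
  intros Hs Hh d; unfold comp_form; rewrite sat_exists_n; cbn [sat].
  setoid_rewrite sat_conj_fin; setoid_rewrite sat_fsubst.
  assert (Earg : forall ds (i : Fin.t j), (fun n => teval M (prepend M j ds (scons d (env_of M x)))
      (match n with 0 => var (fin_to_nat i) | S l => var (j + S l) end))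
      = scons (ds (fin_to_nat i)) (env_of M x)).
  { intros ds i; apply functional_extensionality; intros [|l]; simpl; unfold prepend.
    - pose proof (fin_to_nat_lt i); destruct (Nat.ltb_spec (fin_to_nat i) j); [reflexivity|lia].
    - destruct (Nat.ltb_spec (j + S l) j); [lia|].
      replace (j + S l - j) with (S l) by lia; reflexivity. }
  assert (Ehead : forall ds, (fun n => teval M (prepend M j ds (scons d (env_of M x)))
      (match n with 0 => var j | S l => if l <? j then var l else tzero end))
      = scons d (fun l => if l <? j then ds l else i_zero M)).
  { intros ds; apply functional_extensionality; intros [|l]; simpl; unfold prepend.
    - rewrite Nat.ltb_irrefl, Nat.sub_diag; reflexivity.
    - destruct (Nat.ltb_spec l j); simpl; [|reflexivity]; unfold prepend.
      destruct (Nat.ltb_spec l j); [reflexivity|lia]. }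
  (* The padding with [0] in [comp_form] is exactly how [env_of] reads [ys] beyond [j]. *)
  assert (Eys : forall ds, (forall i : Fin.t j, ds (fin_to_nat i) = numeral M (ys i)) ->
      (fun l => if l <? j then ds l else i_zero M) = env_of M ys).
  { intros ds Hds; apply functional_extensionality; intros l; unfold env_of.
    destruct (Nat.ltb_spec l j) as [Hl|Hl].
    - destruct (fin_to_nat_surj l Hl) as [i <-]; rewrite Hds, vnth_fin_to_nat; reflexivity.
    - rewrite vnth_ge by lia; reflexivity. }
  setoid_rewrite Earg; setoid_rewrite Ehead; split.
  - intros [ds [Hargs Hd]]; apply Hh; rewrite <- (Eys ds); [exact Hd|].
    intros i; apply (Hs i), Hargs.
  - intros ->; exists (env_of M ys); split.
    + intros i; unfold env_of at 1; rewrite vnth_fin_to_nat; apply Hs; reflexivity.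
    + rewrite (Eys (env_of M ys)); [apply Hh; reflexivity|].
      intros i; unfold env_of; rewrite vnth_fin_to_nat; reflexivity.
Qed.

Lemma defines_mu k Ah (x : Fin.t k -> nat) y :
  defines M Ah (vcons y x) 0 ->
  (forall i, i < y -> exists z, defines M Ah (vcons i x) (S z)) ->
  defines M (mu_form Ah) x y.
Proof.
  intros Hy Hlt d; unfold mu_form; cbn [sat]; setoid_rewrite sat_fsubst.
  assert (Ezero : (fun n => teval M (scons d (env_of M x))
      (match n with 0 => tzero | 1 => var 0 | S (S l) => var (S l) end))
      = scons (i_zero M) (scons d (env_of M x)))
    by (apply functional_extensionality; intros [|[|l]]; reflexivity).
  assert (Esucc : forall w i, (fun n => teval M (scons w (scons i (scons d (env_of M x))))
      (match n with 0 => tsucc (var 0) | 1 => var 1 | S (S l) => var (S (S (S l))) end))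
      = scons (i_succ M w) (scons i (env_of M x)))
    by (intros w i; apply functional_extensionality; intros [|[|l]]; reflexivity).
  rewrite Ezero; setoid_rewrite Esucc; change (i_zero M) with (numeral M 0).
  split.
  - intros [Hd Hbelow]; destruct (le_numeral_or_gt M HQ y d) as [[i [Hi ->]]|Hgt].
    + destruct (Nat.eq_dec i y) as [->|Hne]; [reflexivity|].
      destruct (Hlt i ltac:(lia)) as [z Hz].
      rewrite <- env_of_vcons in Hd; apply Hz, (numeral_inj M HQ) in Hd; discriminate.
    + destruct (Hbelow _ Hgt) as [w Hw]; rewrite <- env_of_vcons in Hw.
      apply Hy in Hw; destruct (succ_neq_zero HQ _ Hw).
  - intros ->; split; [rewrite <- env_of_vcons; apply Hy; reflexivity|].
    intros i Hi; change (lt_in M i (numeral M y)) in Hi.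
    destruct (lt_numeral_inv M HQ _ _ Hi) as [i' [Hi' ->]].
    destruct (Hlt i' Hi') as [z Hz]; exists (numeral M z).
    rewrite <- env_of_vcons; apply Hz; reflexivity.
Qed.

Lemma sat_rec_form (Ab As : form F P) y0 N X :
  sat M (scons y0 (scons N X)) (rec_form Ab As) <-> exists c d,
    (forall i, lt_in M i (i_succ M N) -> exists v, beta_rel M v i d c) /\
    (forall v, beta_rel M v (i_zero M) d c -> sat M (scons v X) Ab) /\
    (forall i, lt_in M i N -> forall v w, beta_rel M v i d c -> beta_rel M w (i_succ M i) d c ->
       sat M (scons w (scons i (scons v X))) As) /\
    beta_rel M y0 N d c.
Proof.
  unfold rec_form; cbn [sat]; setoid_rewrite sat_beta_f; setoid_rewrite sat_fsubst.
  assert (Ebase : forall v a b c e, (fun n => teval M (scons v (scons a (scons b (scons c (scons e X)))))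
      (match n with 0 => var 0 | S l => var (5 + l) end)) = scons v X)
    by (intros; apply functional_extensionality; intros [|l]; reflexivity).
  assert (Estep : forall w v i a b c e,
      (fun n => teval M (scons w (scons v (scons i (scons a (scons b (scons c (scons e X)))))))
      (match n with 0 => var 0 | 1 => var 2 | 2 => var 1 | S (S (S l)) => var (7 + l) end))
      = scons w (scons i (scons v X)))
    by (intros; apply functional_extensionality; intros [|[|[|l]]]; reflexivity).
  setoid_rewrite Ebase; setoid_rewrite Estep; reflexivity.
Qed.

Section Recursion.
Context {k : nat} (b : prog m k) (s : prog m (S (S k))) (Ab As : form F P).
Hypothesis Hb : forall x y, eval g b x y -> defines M Ab x y.
Hypothesis Hs : forall x y, eval g s x y -> defines M As x y.

Lemma eval_rec_inv n x y : eval g (pRec b s) (vcons n x) y ->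
  (n = 0 /\ eval g b x y) \/
  exists n' z, n = S n' /\ eval g (pRec b s) (vcons n' x) z /\ eval g s (vcons n' (vcons z x)) y.
Proof. intros H; apply eval_inv in H; exact H. Qed.

Lemma eval_rec_trace n x y : eval g (pRec b s) (vcons n x) y -> exists val : nat -> nat,
  val n = y /\ eval g b x (val 0) /\
  forall j, j < n -> eval g s (vcons j (vcons (val j) x)) (val (S j)).
Proof.
  revert y; induction n; intros y H; apply eval_rec_inv in H;
    destruct H as [[Hn H]|[n' [z [Hn [H1 H2]]]]]; try discriminate.
  - exists (fun _ => y); repeat split; [assumption|lia].
  - injection Hn as <-; destruct (IHn z H1) as [val [Hz [H0 Hstep]]].
    exists (fun j => if j =? S n then y else val j); simpl; rewrite Nat.eqb_refl.
    repeat split; [assumption|].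
    intros j Hj; destruct (Nat.eqb_spec j (S n)); [lia|]; simpl.
    destruct (Nat.eqb_spec j n) as [->|Hne]; [rewrite Hz; exact H2|apply Hstep; lia].
Qed.

Lemma rec_value_unique n x c d :
  (forall i, lt_in M i (numeral M (S n)) -> exists v, beta_rel M v i d c) ->
  (forall v, beta_rel M v (i_zero M) d c -> sat M (scons v (env_of M x)) Ab) ->
  (forall i, lt_in M i (numeral M n) -> forall v w, beta_rel M v i d c ->
     beta_rel M w (i_succ M i) d c -> sat M (scons w (scons i (scons v (env_of M x)))) As) ->
  forall j, j <= n -> forall yj w, eval g (pRec b s) (vcons j x) yj ->
    beta_rel M w (numeral M j) d c -> w = numeral M yj.
Proof.
  intros Hdef Hbase Hstep; induction j; intros Hj yj w Hev Hw; apply eval_rec_inv in Hev;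
    destruct Hev as [[Hn Hev]|[j' [z [Hn [H1 H2]]]]]; try discriminate.
  - apply (Hb x yj Hev), Hbase, Hw.
  - injection Hn as <-.
    destruct (Hdef (numeral M j)) as [v Hv]; [apply (lt_numeral M HQ); lia|].
    rewrite (IHj ltac:(lia) z v H1 Hv) in Hv.
    specialize (Hstep _ (lt_numeral M HQ j n ltac:(lia)) _ _ Hv Hw).
    rewrite <- !env_of_vcons in Hstep; apply (Hs _ _ H2), Hstep.
Qed.

Lemma defines_rec n x y :
  eval g (pRec b s) (vcons n x) y -> defines M (rec_form Ab As) (vcons n x) y.
Proof.
  intros H y0; rewrite env_of_vcons, sat_rec_form; change (i_succ M (numeral M n)) with (numeral M (S n)).
  split.
  - intros [c [d [Hdef [Hbase [Hstep Hy]]]]].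
    exact (rec_value_unique n x c d Hdef Hbase Hstep n (le_n n) y y0 H Hy).
  - intros ->; destruct (eval_rec_trace n x y H) as [val [Hy [H0 Hval]]].
    destruct (goedel_beta n val) as [c [d Hcd]].
    exists (numeral M c), (numeral M d); split; [|split; [|split]].
    + intros i Hi; destruct (lt_numeral_inv M HQ _ _ Hi) as [i' [Hi' ->]].
      eexists; apply beta_rel_numeral; [exact HQ|reflexivity].
    + intros v Hv; change (i_zero M) with (numeral M 0) in Hv.
      apply beta_rel_numeral in Hv; [|exact HQ]; rewrite Hcd in Hv by lia; subst v.
      apply (Hb x (val 0) H0); reflexivity.
    + intros i Hi v w Hv Hw; destruct (lt_numeral_inv M HQ _ _ Hi) as [i' [Hi' ->]].
      change (i_succ M (numeral M i')) with (numeral M (S i')) in Hw.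
      apply beta_rel_numeral in Hv, Hw; try exact HQ.
      rewrite Hcd in Hv, Hw by lia; subst v w.
      rewrite <- (env_of_vcons M (val i') x), <- (env_of_vcons M i').
      apply (Hs _ _ (Hval i' Hi')); reflexivity.
    + apply beta_rel_numeral; [exact HQ|]; rewrite Hcd by lia; congruence.
Qed.

End Recursion.

End ProgramsDefineTheirValues.

Lemma defines_prog {F P} (M : structure F P) (HQ : Q_model M)
  {m} (g : (Fin.t m -> nat) -> nat -> Prop) (Ag : form F P) :
  (forall x y, g x y -> defines M Ag x y) ->
  forall k (p : prog m k) x y, eval g p x y -> defines M (prog_form Ag p) x y.
Proof.
  intros HAg k p; induction p; intros x y Hev; pose proof (eval_inv g _ _ _ _ Hev) as Hinv;
    simpl in Hinv.
  - subst; intros d; simpl; tauto.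
  - subst; intros d; simpl; tauto.
  - subst; intros d; simpl; unfold env_of; rewrite vnth_fin_to_nat; tauto.
  - apply HAg, Hinv.
  - destruct Hinv as [ys [Hgs Hh]]; apply (defines_comp M) with ys; auto.
  - rewrite <- (vcons_eta x) in Hev |- *; eapply (defines_rec M HQ g); eauto.
  - destruct Hinv as [H0 Hlt]; apply (defines_mu M HQ); auto.
    intros i Hi; destruct (Hlt i Hi) as [z Hz]; exists z; auto.
Qed.

Theorem mainTheorem19 (F P : nat -> Type) (T : form F P -> Prop)
  (m : nat) (g : (Fin.t m -> nat) -> nat -> Prop) :
  extension_of_Q T -> partial_function g -> represents T g ->
  forall (k : nat) (f : (Fin.t k -> nat) -> nat -> Prop),
    partial_function f -> oracle_computable g f -> represents T f.
Proof.
  intros HT _ Hrep k f _ [p Hp].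
  pose proof (proj1 HT) as Hth.
  apply represents_iff_defines in Hrep as [Ag [HAg Hg]]; [|exact Hth].
  apply represents_iff_defines; [exact Hth|].
  exists (prog_form Ag p); split; [apply prog_form_bound, HAg|].
  intros M x y HM Hxy.
  apply (defines_prog M (Q_model_of_model T M HT HM) g Ag); [|apply Hp, Hxy].
  intros x' y'; apply Hg, HM.
Qed.
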